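(* Let $\Bbbk$ be an algebraically closed field of characteristic $2$ and let $\mathfrak{u}(\mathfrak{m})$ be the algebra generated by $a,b,c$ with relations $ab+ba=c$, $ac+ca=a$, $bc+cb=b$, $a^4=b^4=0$, $c^2+c=0$. Then the projective cover $P(V_0)$ and the injective envelope $I(V_0)$ of $V_0$ are both isomorphic to $M$, and the projective cover $P(V_1)$ and injective envelope $I(V_1)$ of $V_1$ are both isomorphic to $N$.
   Context: $V_0$ is the one-dimensional module with $a,b,c$ acting by $0$; $V_1$ is the three-dimensional module with basis $v_1,v_2,v_3$, $av_1=v_2$, $av_2=v_3$, $av_3=0$, $bv_1=0$, $bv_2=v_1$, $bv_3=v_2$, $cv_1=v_1$, $cv_2=0$, $cv_3=v_3$. $M$ is the $8$-dimensional module with basis $v_1,\dots,v_4,w_1,\dots,w_4$ and action: $av_i=v_{i+1}$ ($i=1,2,3$), $av_4=0$; $bv_1=bv_4=0$, $bv_i=v_{i-1}$ ($i=2,3$); $cv_i=v_i$ ($i=1,3$), $cv_i=0$ ($i=2,4$); $aw_i=w_{i+1}$ ($i=1,2,3$), $aw_4=0$; $bw_i=v_{i+2}$ ($i=1,2$), $bw_i=w_{i-1}$ ($i=3,4$); $cw_i=0$ ($i=1,3$), $cw_i=w_i$ ($i=2,4$). $N$ is the $8$-dimensional module with basis $v_1,\dots,v_4,w_1,\dots,w_4$ and action: $av_i=v_{i+1}$ ($i=1,2,3$), $av_4=0$; $bv_i=0$ ($i=1,2$), $bv_i=v_{i-1}$ ($i=3,4$); $cv_i=0$ ($i=1,3$),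 $cv_i=v_i$ ($i=2,4$); $aw_i=w_{i+1}$ ($i=1,2,3$), $aw_4=0$; $bw_i=v_i$ ($i=1,4$), $bw_i=v_i+w_{i-1}$ ($i=2,3$); $cw_i=w_i$ ($i=1,3$), $cw_i=0$ ($i=2,4$). *)

From HB Require Import structures.
From mathcomp Require Import all_boot all_order all_algebra.
Set Implicit Arguments. Unset Strict Implicit. Unset Printing Implicit Defensive.
Import GRing.Theory.
Local Open Scope ring_scope.

(* A finite-dimensional (left) module over the free algebra k<a,b,c>:
   a vector space F^dim (column vectors) with three operators giving the
   action of a, b, c.  Entry (i, j) of a matrix is the coefficient of e_i
   in x . e_j. *)
Record umod (F : fieldType) := UMod {
  udim : nat;
  actA : 'M[F]_udim;
  actB : 'M[F]_udim;
  actC : 'M[F]_udim }.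

Definition is_umod (F : fieldType) (X : umod F) : Prop :=
  [/\ actA X *m actB X + actB X *m actA X = actC X,
      actA X *m actC X + actC X *m actA X = actA X,
      actB X *m actC X + actC X *m actB X = actB X,
      actA X ^+ 4 = 0 /\ actB X ^+ 4 = 0
    & actC X *m actC X + actC X = 0].

Definition is_hom (F : fieldType) (X Y : umod F) (f : 'M[F]_(udim Y, udim X)) :=
  [/\ f *m actA X = actA Y *m f, f *m actB X = actB Y *m f
    & f *m actC X = actC Y *m f].

Definition surj (F : fieldType) m n (f : 'M[F]_(m, n)) : Prop := \rank f = m.
Definition inj (F : fieldType) m n (f : 'M[F]_(m, n)) : Prop := \rank f = n.

Definition isomorphic (F : fieldType) (X Y : umod F) : Prop :=
  exists (f : 'M[F]_(udim Y, udim X)) (g : 'M[F]_(udim X, udim Y)),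
    [/\ is_hom f, is_hom g, g *m f = 1%:M & f *m g = 1%:M].

Definition projective (F : fieldType) (P : umod F) : Prop :=
  forall (X Y : umod F) (g : 'M[F]_(udim Y, udim X)) (h : 'M[F]_(udim Y, udim P)),
    is_umod X -> is_umod Y -> is_hom g -> surj g -> is_hom h ->
    exists k : 'M[F]_(udim X, udim P), is_hom k /\ g *m k = h.

Definition injective (F : fieldType) (I : umod F) : Prop :=
  forall (X Y : umod F) (g : 'M[F]_(udim Y, udim X)) (h : 'M[F]_(udim I, udim X)),
    is_umod X -> is_umod Y -> is_hom g -> inj g -> is_hom h ->
    exists k : 'M[F]_(udim I, udim Y), is_hom k /\ k *m g = h.

Definition essential_epi (F : fieldType) (P V : umod F) (p : 'M[F]_(udim V, udim P)) :=
  [/\ is_hom p, surj p &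
      forall (X : umod F) (g : 'M[F]_(udim P, udim X)),
        is_umod X -> is_hom g -> surj (p *m g) -> surj g].

Definition essential_mono (F : fieldType) (V I : umod F) (i : 'M[F]_(udim I, udim V)) :=
  [/\ is_hom i, inj i &
      forall (X : umod F) (g : 'M[F]_(udim X, udim I)),
        is_umod X -> is_hom g -> inj (g *m i) -> inj g].

Definition projective_cover (F : fieldType) (P V : umod F) : Prop :=
  [/\ is_umod P, projective P & exists p, @essential_epi F P V p].

Definition injective_envelope (F : fieldType) (I V : umod F) : Prop :=
  [/\ is_umod I, injective I & exists i, @essential_mono F V I i].

(* "P(V) is isomorphic to M": M is a projective cover of V, and every
   projective cover of V is isomorphic to M (similarly for I(V)). *)
Definition proj_cover_iso (F : fieldType) (V M : umod F) : Prop :=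
  projective_cover M V /\ forall P, projective_cover P V -> isomorphic P M.

Definition inj_env_iso (F : fieldType) (V M : umod F) : Prop :=
  injective_envelope M V /\ forall I, injective_envelope I V -> isomorphic I M.

(* 0/1 matrix whose (i,j) entry is 1 iff (i,j) is in s (0-based indices) *)
Definition mx01 (F : fieldType) n (s : seq (nat * nat)) : 'M[F]_n :=
  \matrix_(i < n, j < n) (if (nat_of_ord i, nat_of_ord j) \in s then 1 else 0).

Definition V0 (F : fieldType) : umod F := @UMod F 1 0 0 0.

(* basis v1,v2,v3 = indices 0,1,2 *)
Definition V1 (F : fieldType) : umod F :=
  @UMod F 3 (mx01 F 3 [:: (1,0); (2,1)])%N
            (mx01 F 3 [:: (0,1); (1,2)])%N
            (mx01 F 3 [:: (0,0); (2,2)])%N.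

(* basis v1..v4 = indices 0..3, w1..w4 = indices 4..7 *)
Definition Mmod (F : fieldType) : umod F :=
  @UMod F 8 (mx01 F 8 [:: (1,0); (2,1); (3,2); (5,4); (6,5); (7,6)])%N
            (mx01 F 8 [:: (0,1); (1,2); (2,4); (3,5); (5,6); (6,7)])%N
            (mx01 F 8 [:: (0,0); (2,2); (5,5); (7,7)])%N.

Definition Nmod (F : fieldType) : umod F :=
  @UMod F 8 (mx01 F 8 [:: (1,0); (2,1); (3,2); (5,4); (6,5); (7,6)])%N
            (mx01 F 8 [:: (1,2); (2,3); (0,4); (3,7); (1,5); (4,5); (2,6); (5,6)])%N
            (mx01 F 8 [:: (1,1); (3,3); (4,4); (6,6)])%N.

(* u(m) is 32-dimensional with basis a^i b^j c^k (i, j < 4, k < 2).  Using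
   the defining relations as rewriting rules, the multiplication table of this
   basis holds in every u(m)-module, so the regular module is free of rank one,
   hence projective.  M and N are direct summands of it, so they are
   projective, and they are isomorphic to their transposes, so they are also
   injective.  Both are cyclic, generated by w1, and an element t of u(m) with
   t w1 = w1 and two-dimensional image forces every endomorphism to be
   a + b S with S^2 = 0.  An endomorphism fixing the top (or the socle) thus
   has a = 1 and is invertible, so the projection onto the top is an
   essential epimorphism and the inclusion of the socle an essential
   monomorphism.  Uniqueness follows by lifting in both directions and
   comparing dimensions.  All concrete identities are between 0/1 matrices,
   and in characteristic 2 they are decided by computing over GF(2). *)

From mathcomp Require Import all_boot all_order all_algebra.
Set Implicit Arguments. Unset Strict Implicit. Unset Printing Implicit Defensive.
Import GRing.Theory.

Definition bmat := nat -> nat -> bool.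

Fixpoint bsum (n : nat) (h : nat -> bool) : bool := if n is k.+1 then bsum k h (+) h k else false.

Definition bmul (n : nat) (f g : bmat) : bmat := fun i j => bsum n (fun k => f i k && g k j).
Definition badd (f g : bmat) : bmat := fun i j => f i j (+) g i j.
Definition bzero : bmat := fun _ _ => false.
Definition bid : bmat := fun i j => i == j.
Definition btr (f : bmat) : bmat := fun i j => f j i.
Definition bsel (d : nat) : bmat := fun i j => j == i + d.
Definition bunit (k : nat) : bmat := fun i _ => i == k.
Definition banti (n : nat) : bmat := fun i j => i + j == n.-1.
Definition bmx01 (s : seq (nat * nat)) : bmat := fun i j => (i, j) \in s.

Definition beq (m n : nat) (f g : bmat) : bool :=
  all (fun i => all (fun j => f i j == g i j) (iota 0 n)) (iota 0 m).

(* Tabulating [f] makes an iterated product cost one evaluation per entry. *)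
Definition bmemo (m n : nat) (f : bmat) : bmat :=
  let t := [seq [seq f i j | j <- iota 0 n] | i <- iota 0 m] in
  fun i j => nth false (nth [::] t i) j.

Section GF2Matrices.
Local Open Scope ring_scope.
Variable F : fieldType.
Hypothesis char2 : 2%N \in [pchar F].

Lemma natr_addb (b1 b2 : bool) : ((b1 (+) b2)%:R : F) = b1%:R + b2%:R.
Proof. by case: b1; case: b2; rewrite ?addr0 ?add0r ?(addrr_pchar2 char2). Qed.

Definition bmx m n (f : bmat) : 'M[F]_(m, n) := \matrix_(i, j) (f i j)%:R.

Lemma natr_bsum n (h : nat -> bool) : \sum_(k < n) ((h k)%:R : F) = (bsum n h)%:R.
Proof. by elim: n => [|n IH]; rewrite ?big_ord0 // big_ord_recr IH natr_addb. Qed.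

Lemma bmxM m n p f g : bmx m n f *m bmx n p g = bmx m p (bmul n f g).
Proof.
apply/matrixP=> i j; rewrite !mxE -natr_bsum; apply: eq_bigr => k _.
by rewrite !mxE; case: (f i k); rewrite ?mul0r ?mul1r.
Qed.

Lemma bmxD m n f g : bmx m n f + bmx m n g = bmx m n (badd f g).
Proof. by apply/matrixP=> i j; rewrite !mxE natr_addb. Qed.

Lemma bmx_tr m n f : (bmx m n f)^T = bmx n m (btr f).
Proof. by apply/matrixP=> i j; rewrite !mxE /=. Qed.

Lemma bmx_memo m n f : bmx m n (bmemo m n f) = bmx m n f.
Proof.
apply/matrixP=> i j; rewrite !mxE /bmemo (nth_map 0%N) ?size_iota // nth_iota //.
by rewrite (nth_map 0%N) ?size_iota // nth_iota.
Qed.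

Lemma bmx_eq m n f g : beq m n f g -> bmx m n f = bmx m n g.
Proof.
move=> /allP fg; apply/matrixP=> i j; rewrite !mxE.
have /fg/allP/(_ j) : (i : nat) \in iota 0 m by rewrite mem_iota ltn_ord.
by rewrite mem_iota ltn_ord => /(_ isT)/eqP->.
Qed.

Lemma bmx0 m n : bmx m n bzero = 0.
Proof. by apply/matrixP=> i j; rewrite !mxE. Qed.

Lemma bmx1 n : bmx n n bid = 1%:M.
Proof. by apply/matrixP=> i j; rewrite !mxE. Qed.

Lemma bmx_eq0 m n f : beq m n f bzero -> bmx m n f = 0.
Proof. by move/bmx_eq->; apply: bmx0. Qed.

Lemma bmx_eq1 n f : beq n n f bid -> bmx n n f = 1%:M.
Proof. by move/bmx_eq->; apply: bmx1. Qed.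

Lemma delta_bmx n (i : 'I_n) : delta_mx i 0 = bmx n 1 (bunit i).
Proof. by apply/matrixP=> k l; rewrite !mxE (ord1 l) eqxx andbT. Qed.

Lemma mx01E n s : mx01 F n s = bmx n n (bmx01 s).
Proof. by apply/matrixP=> i j; rewrite !mxE /bmx01; case: (_ \in s). Qed.

End GF2Matrices.

(* Generators a, b, c are coded 0, 1, 2; an [ncpoly] is a sum of words over GF(2). *)
Definition word := seq nat.
Definition ncpoly := seq word.

(* The defining relations of u(m) as sums equal to 0 in characteristic 2, each
   with its leading word first: ab + ba = c becomes ba + ab + c. *)
Definition um_rels : seq ncpoly :=
  [:: [:: [:: 1; 0]; [:: 0; 1]; [:: 2]];
      [:: [:: 2; 0]; [:: 0; 2]; [:: 0]];
      [:: [:: 2; 1]; [:: 1; 2]; [:: 1]];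
      [:: [:: 0; 0; 0; 0]];
      [:: [:: 1; 1; 1; 1]];
      [:: [:: 2; 2]; [:: 2]]]%N.

Definition cancel2 (p : ncpoly) : ncpoly := [seq w <- undup p | odd (count_mem w p)].

Definition sandwich (u : word) (r : ncpoly) (v : word) : ncpoly :=
  [seq u ++ w ++ v | w <- r].

Definition rewrite_at (w : word) (r : ncpoly) : option ncpoly :=
  let l := head [::] r in
  if infix l w then
    let i := infix_index l w in Some (sandwich (take i w) r (drop (i + size l) w))
  else None.

(* Adding the sandwich [u r v] to [p] cancels the occurrence [u l v] of the
   leading word [l] of [r]. *)
Fixpoint um_nf (fuel : nat) (p : ncpoly) : ncpoly :=
  if fuel is n.+1 then
    if pmap id [seq rewrite_at w r | w <- p, r <- um_rels] is d :: _
    then um_nf n (cancel2 (p ++ d)) else p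
  else p.

Section Evaluation.
Local Open Scope ring_scope.
Variable F : fieldType.
Implicit Types (X : umod F) (w : word) (p : ncpoly).

Definition gen_mx X (g : nat) : 'M[F]_(udim X) :=
  match g with 0 => actA X | 1 => actB X | _ => actC X end.

Definition evalw X w : 'M[F]_(udim X) := foldr (fun g A => gen_mx X g *m A) 1%:M w.

Definition evalp X p : 'M[F]_(udim X) := \sum_(w <- p) evalw X w.

Lemma evalw_cat X u v : evalw X (u ++ v) = evalw X u *m evalw X v.
Proof. by elim: u => [|g u IH] /=; rewrite ?mul1mx // IH mulmxA. Qed.

Lemma evalp_cat X p q : evalp X (p ++ q) = evalp X p + evalp X q.
Proof. exact: big_cat. Qed.

Lemma evalp_sandwich X u r v :
  evalp X (sandwich u r v) = evalw X u *m evalp X r *m evalw X v.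
Proof.
rewrite /evalp big_map mulmx_sumr mulmx_suml; apply: eq_bigr => w _.
by rewrite !evalw_cat mulmxA.
Qed.

Lemma evalp_rewrite_at X w r d :
  rewrite_at w r = Some d -> evalp X r = 0 -> evalp X d = 0.
Proof.
rewrite /rewrite_at; case: ifP => // _ [<-] r0.
by rewrite evalp_sandwich r0 mulmx0 mul0mx.
Qed.

Hypothesis char2 : 2%N \in [pchar F].

Lemma addmx_char2 m n (A : 'M[F]_(m, n)) : A + A = 0.
Proof. by rewrite -mulr2n -scaler_nat (pcharf0 char2) scale0r. Qed.

Lemma addmx_eq0_char2 m n (A B : 'M[F]_(m, n)) : A + B = 0 -> A = B.
Proof. by move=> AB0; rewrite -[A]addr0 -(addmx_char2 B) addrA AB0 add0r. Qed.

Lemma evalp_cancel2 X p : evalp X (cancel2 p) = evalp X p.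
Proof.
rewrite /evalp /cancel2 big_filter.
rewrite -[RHS](big_undup_iterop_count _ _ _ (evalw X)) big_mkcond.
apply: eq_bigr => w _; rewrite Monoid.iteropE.
have -> k : iter k (+%R (evalw X w)) 0 = evalw X w *+ k.
  by elim: k => //= k ->; rewrite mulrS.
elim: (count_mem w p) => [|k IH] //; rewrite mulrS -IH /=.
by case: (odd k); rewrite ?addmx_char2 ?addr0.
Qed.

Lemma is_umodP X : is_umod X <-> {in um_rels, forall r, evalp X r = 0}.
Proof.
have evalp2 x y : evalp X [:: x; y] = evalw X x + evalw X y.
  by rewrite /evalp !big_cons big_nil addr0.
have evalp3 x y z : evalp X [:: x; y; z] = evalw X x + evalw X y + evalw X z.
  by rewrite /evalp !big_cons big_nil addr0 !addrA.
have evalp1 x : evalp X [:: x] = evalw X x by rewrite /evalp big_seq1.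
have pow4 (A : 'M[F]_(udim X)) : A ^+ 4 = A *m (A *m (A *m A)).
  by rewrite !mulmxE !exprS expr0 mulr1.
split=> [[ab ac bc [a4 b4] c2] r|rels0].
  rewrite !inE => /orP[|/orP[|/orP[|/orP[|/orP[|]]]]] /eqP->;
    rewrite ?evalp3 ?evalp2 ?evalp1 /= ?mulmx1.
  - by rewrite (addrC (actB X *m _)) ab addmx_char2.
  - by rewrite (addrC (actC X *m _)) ac addmx_char2.
  - by rewrite (addrC (actC X *m _)) bc addmx_char2.
  - by rewrite -pow4 a4.
  - by rewrite -pow4 b4.
  - by rewrite c2.
have rel k : (k < 6)%N -> evalp X (nth [::] um_rels k) = 0.
  by move=> k6; apply: rels0; rewrite mem_nth.
move: (rel 0%N isT) (rel 1%N isT) (rel 2%N isT) (rel 3%N isT) (rel 4%N isT) (rel 5%N isT).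
rewrite /= ?evalp3 ?evalp2 ?evalp1 /= ?mulmx1 -!pow4.
rewrite (addrC (actB X *m _)) (addrC (actC X *m actA X)) (addrC (actC X *m actB X)).
by move=> /addmx_eq0_char2 ab /addmx_eq0_char2 ac /addmx_eq0_char2 bc a4 b4 c2.
Qed.

Lemma evalp_um_nf X : is_umod X -> forall fuel p, evalp X (um_nf fuel p) = evalp X p.
Proof.
move=> /is_umodP rels0; elim=> [|n IH] p //=.
case E: (pmap id _) => [|d ds] //.
have : d \in pmap id [seq rewrite_at w r | w <- p, r <- um_rels] by rewrite E mem_head.
rewrite mem_pmap map_id => /allpairsP[[w r] /= [_ r_rel /esym/evalp_rewrite_at d0]].
by rewrite IH evalp_cancel2 evalp_cat (d0 X (rels0 r r_rel)) addr0.
Qed.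

End Evaluation.

Section ModuleTheory.
Local Open Scope ring_scope.
Variable F : fieldType.
Implicit Types X Y Z : umod F.

Lemma is_homP X Y (f : 'M[F]_(udim Y, udim X)) :
  is_hom f <-> forall g, f *m gen_mx X g = gen_mx Y g *m f.
Proof.
split=> [[fA fB fC] [|[|g]] // | fg].
by split; [apply: (fg 0%N) | apply: (fg 1%N) | apply: (fg 2%N)].
Qed.

Lemma is_hom_mul X Y Z (f : 'M[F]_(udim Z, udim Y)) (g : 'M[F]_(udim Y, udim X)) :
  is_hom f -> is_hom g -> is_hom (f *m g).
Proof.
move=> /is_homP fh /is_homP gh; apply/is_homP => k.
by rewrite -mulmxA gh !mulmxA fh.
Qed.

Lemma is_hom_inv X Y (f : 'M[F]_(udim Y, udim X)) (g : 'M[F]_(udim X, udim Y)) :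
  is_hom f -> g *m f = 1%:M -> f *m g = 1%:M -> is_hom g.
Proof.
move=> /is_homP fh gf fg; apply/is_homP => k.
by rewrite -[LHS]mulmx1 -fg !mulmxA -[g *m _ *m f]mulmxA -fh mulmxA gf mul1mx.
Qed.

Lemma hom_evalw X Y (f : 'M[F]_(udim Y, udim X)) w :
  is_hom f -> f *m evalw X w = evalw Y w *m f.
Proof.
move=> /is_homP fh; elim: w => [|g w IH] /=; first by rewrite mulmx1 mul1mx.
by rewrite mulmxA fh -!mulmxA IH.
Qed.

Lemma hom_evalp X Y (f : 'M[F]_(udim Y, udim X)) p :
  is_hom f -> f *m evalp X p = evalp Y p *m f.
Proof.
move=> fh; rewrite /evalp mulmx_sumr mulmx_suml.
by apply: eq_bigr => w _; apply: hom_evalw.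
Qed.

Lemma isomorphic_rank X Y (f : 'M[F]_(udim Y, udim X)) :
  is_hom f -> udim X = udim Y -> \rank f = udim Y -> isomorphic X Y.
Proof.
move=> fh dimXY rkf; have /row_freeP[g fg] : row_free f by rewrite /row_free rkf.
have /row_fullP[h hf1] : row_full f by rewrite /row_full rkf dimXY.
have gh : g = h by rewrite -[g]mul1mx -hf1 -mulmxA fg mulmx1.
have gf : g *m f = 1%:M by rewrite gh.
by exists f, g; split=> //; apply: is_hom_inv fh gf fg.
Qed.

Lemma proj_cover_unique (V P Q : umod F) :
  is_umod V -> projective_cover P V -> projective_cover Q V -> isomorphic Q P.
Proof.
move=> umV [umP projP [p [hp sp epi_p]]] [umQ projQ [q [hq sq epi_q]]].
have [f [hf qf]] := projQ P V p q umP umV hp sp hq.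
have [g [hg pg]] := projP Q V q p umQ umV hq sq hp.
have sf : surj f by apply: epi_p umQ hf _; rewrite /surj qf.
have sg : surj g by apply: epi_q umP hg _; rewrite /surj pg.
have dimQP : udim Q = udim P.
  by apply/eqP; rewrite eqn_leq -{1}sg -{3}sf !rank_leq_col.
exact: isomorphic_rank hf dimQP sf.
Qed.

Lemma inj_env_unique (V I J : umod F) :
  is_umod V -> injective_envelope I V -> injective_envelope J V -> isomorphic J I.
Proof.
move=> umV [umI injI [i [hi ii mono_i]]] [umJ injJ [j [hj ij mono_j]]].
have [f [hf fi]] := injJ V I i j umV umI hi ii hj.
have [g [hg gj]] := injI V J j i umV umJ hj ij hi.
have jf : inj f by apply: mono_i umJ hf _; rewrite /inj fi.
have jg : inj g by apply: mono_j umI hg _; rewrite /inj gj.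
have dimJI : udim J = udim I.
  by apply/eqP; rewrite eqn_leq -{1}jg -{3}jf !rank_leq_row.
exact: isomorphic_rank hg dimJI (etrans jg dimJI).
Qed.

Lemma projective_retract (P Q : umod F)
    (i : 'M[F]_(udim Q, udim P)) (r : 'M[F]_(udim P, udim Q)) :
  is_hom i -> is_hom r -> r *m i = 1%:M -> projective Q -> projective P.
Proof.
move=> hi hr ri projQ X Y g h umX umY hg sg hh.
have [k [hk gk]] := projQ X Y g (h *m r) umX umY hg sg (is_hom_mul hh hr).
by exists (k *m i); split; [apply: is_hom_mul | rewrite mulmxA gk -mulmxA ri mulmx1].
Qed.

Lemma injective_iso (I J : umod F) : isomorphic I J -> injective I -> injective J.
Proof.
move=> [f [g [hf hg gf fg]]] injI X Y k h umX umY hk ik hh.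
have [l [hl lk]] := injI X Y k (g *m h) umX umY hk ik (is_hom_mul hg hh).
by exists (f *m l); split; [apply: is_hom_mul | rewrite -mulmxA lk mulmxA fg mul1mx].
Qed.

End ModuleTheory.

Section Duality.
Local Open Scope ring_scope.
Variable F : fieldType.
Implicit Types X Y : umod F.

(* The relations of u(m) are invariant under reversing words, so the
   transposed action is again a u(m)-module: the dual twisted by the
   anti-automorphism fixing a, b and c. *)
Definition trmod X : umod F := UMod (actA X)^T (actB X)^T (actC X)^T.

Lemma gen_mx_trmod X g : gen_mx (trmod X) g = (gen_mx X g)^T.
Proof. by case: g => [|[|g]]. Qed.

Lemma is_umod_trmod X : is_umod X -> is_umod (trmod X).
Proof.
have trX n (A : 'M[F]_n) k : (A ^+ k)^T = A^T ^+ k.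
  by elim: k => [|k IH]; rewrite ?trmx1 // exprSr exprS -IH -!mulmxE trmx_mul.
case=> ab ac bc [a4 b4] c2; split=> /=.
- by rewrite -!trmx_mul -linearD /= addrC ab.
- by rewrite -!trmx_mul -linearD /= addrC ac.
- by rewrite -!trmx_mul -linearD /= addrC bc.
- by rewrite -!trX a4 b4 !trmx0.
- by rewrite -trmx_mul -linearD /= c2 trmx0.
Qed.

Lemma is_hom_tr X Y (f : 'M[F]_(udim Y, udim X)) :
  is_hom f -> is_hom (X := trmod Y) (Y := trmod X) f^T.
Proof.
by move=> /is_homP fh; apply/is_homP => g; rewrite !gen_mx_trmod -!trmx_mul fh.
Qed.

Lemma is_hom_tr_trmod X Y (f : 'M[F]_(udim Y, udim X)) :
  is_hom (X := X) (Y := trmod Y) f -> is_hom (X := Y) (Y := trmod X) f^T.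
Proof.
move=> /is_homP fh; apply/is_homP => g; apply: trmx_inj.
by rewrite !trmx_mul !trmxK gen_mx_trmod trmxK fh gen_mx_trmod.
Qed.

Lemma injective_trmod P : projective P -> injective (trmod P).
Proof.
move=> projP X Y g h umX umY hg ig hh.
have sgT : surj g^T by rewrite /surj mxrank_tr.
have [k [hk gk]] := projP (trmod Y) (trmod X) g^T h^T (is_umod_trmod umY) (is_umod_trmod umX)
  (is_hom_tr hg) sgT (is_hom_tr_trmod hh).
by exists k^T; split; [apply: is_hom_tr_trmod | rewrite -[g]trmxK -trmx_mul gk trmxK].
Qed.

End Duality.

(* [cyc_map X q m] sends [q i . m0] to [q i . m] when the [q i . m0] are the
   standard basis vectors. *)
Definition cyc_map (F : fieldType) (X : umod F) (q : nat -> ncpoly)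
    (m : 'cV[F]_(udim X)) : 'M[F]_(udim X) :=
  \matrix_(k, i) (evalp X (q i) *m m)%R k ord0.
Arguments cyc_map {F} X q m.

Section LocalEndomorphisms.
Local Open Scope ring_scope.
Variable F : fieldType.
Implicit Types X : umod F.

Lemma eq_mx_delta_col m n (A B : 'M[F]_(m, n)) :
  (forall i, A *m delta_mx i (0 : 'I_1) = B *m delta_mx i 0) -> A = B.
Proof.
move=> AB; apply/matrixP=> k i.
by move: (AB i) => /(congr1 (fun C : 'M_(m, 1) => C k 0)); rewrite -!colE !mxE.
Qed.

Lemma cyc_map_col X q m i : cyc_map X q m *m delta_mx i 0 = evalp X (q i) *m m.
Proof. by apply/matrixP=> k l; rewrite -colE !mxE (ord1 l). Qed.

(* Since [phi] commutes with [t], [phi m0 = phi (t m0) = t (phi m0)] lies in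
   the image of [t], which is spanned by [m0] and [m1]. *)
Lemma hom_endo_decomp X (m0 m1 : 'cV[F]_(udim X)) (r1 r2 : 'rV[F]_(udim X))
    (q : nat -> ncpoly) (t : ncpoly) :
  (forall i : 'I_(udim X), evalp X (q i) *m m0 = delta_mx i 0) ->
  evalp X t = m0 *m r1 + m1 *m r2 -> evalp X t *m m0 = m0 ->
  forall phi, is_hom phi -> exists a b : F, phi = a *: 1%:M + b *: cyc_map X q m1.
Proof.
move=> qm0 tdef tm0 phi hphi.
exists ((r1 *m phi *m m0) 0 0), ((r2 *m phi *m m0) 0 0).
have phim0 : phi *m m0 = (r1 *m phi *m m0) 0 0 *: m0 + (r2 *m phi *m m0) 0 0 *: m1.
  rewrite -{1}tm0 mulmxA hom_evalp // -mulmxA tdef mulmxDl -!mulmxA !(mulmxA _ phi).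
  by rewrite {1}[r1 *m _ *m _]mx11_scalar {1}[r2 *m _ *m _]mx11_scalar !mul_mx_scalar.
apply: eq_mx_delta_col => i; rewrite -qm0 mulmxA hom_evalp // -mulmxA phim0.
by rewrite mulmxDr -!scalemxAr qm0 mulmxDl -!scalemxAl mul1mx cyc_map_col.
Qed.

Lemma scalemx1_eq1 n (x : F) : (0 < n)%N -> x *: 1%:M = 1%:M :> 'M[F]_n -> x = 1.
Proof. by move=> n0 /matrixP/(_ (Ordinal n0) (Ordinal n0)); rewrite !mxE eqxx mulr1. Qed.

Section LocalEnd.
Variables (M : umod F) (S : 'M[F]_(udim M)).
Hypothesis endM : forall phi, is_hom phi -> exists a b : F, phi = a *: 1%:M + b *: S.
Hypothesis S2 : S *m S = 0.

Lemma rank_1_plus_nilpotent (b : F) : \rank (1%:M + b *: S)%R = udim M.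
Proof.
apply/eqP/row_freeP; exists (1%:M - b *: S).
by rewrite mulmxBr mulmx1 mulmxDl mul1mx -scalemxAr -scalemxAl S2 !scaler0 addr0 addrK.
Qed.

Lemma essential_epi_local (V : umod F) (p : 'M[F]_(udim V, udim M)) s :
  is_umod V -> projective M -> (0 < udim V)%N ->
  is_hom p -> p *m s = 1%:M -> p *m S = 0 -> essential_epi p.
Proof.
move=> umV projM dimV hp ps pS; split=> //; first by apply/eqP/row_freeP; exists s.
move=> X g umX hg spg.
have [k [hk pgk]] := projM X V (p *m g) p umX umV (is_hom_mul hp hg) spg hp.
have [a [b phi_ab]] := endM (is_hom_mul hg hk).
have a1 : a = 1.
  apply: (scalemx1_eq1 dimV); rewrite -ps scalemxAl; congr (_ *m s).
  by rewrite -[RHS]pgk -mulmxA phi_ab mulmxDr -!scalemxAr mulmx1 pS scaler0 addr0.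
have rk : \rank (g *m k) = udim M by rewrite phi_ab a1 scale1r rank_1_plus_nilpotent.
by apply/eqP; rewrite eqn_leq rank_leq_row -{1}rk mxrankM_maxl.
Qed.

Lemma essential_mono_local (V : umod F) (i : 'M[F]_(udim M, udim V)) r :
  is_umod V -> injective M -> (0 < udim V)%N ->
  is_hom i -> r *m i = 1%:M -> S *m i = 0 -> essential_mono i.
Proof.
move=> umV injM dimV hi ri Si; split=> //; first by apply/eqP/row_fullP; exists r.
move=> X g umX hg igi.
have [k [hk kgi]] := injM V X (g *m i) i umV umX (is_hom_mul hg hi) igi hi.
have [a [b phi_ab]] := endM (is_hom_mul hk hg).
have a1 : a = 1.
  apply: (scalemx1_eq1 dimV); rewrite -ri scalemxAr; congr (r *m _).
  by rewrite -[RHS]kgi mulmxA phi_ab mulmxDl -!scalemxAl mul1mx Si scaler0 addr0.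
have rk : \rank (k *m g) = udim M by rewrite phi_ab a1 scale1r rank_1_plus_nilpotent.
by apply/eqP; rewrite eqn_leq rank_leq_col -{1}rk mxrankM_maxr.
Qed.

End LocalEnd.
End LocalEndomorphisms.

Definition bevalw (n : nat) (fs : nat -> bmat) (w : word) : bmat :=
  foldr (fun g acc => bmemo n n (bmul n (fs g) acc)) bid w.

Definition bevalp (n : nat) (fs : nat -> bmat) (p : ncpoly) : bmat :=
  foldr (fun w acc => badd (bevalw n fs w) acc) bzero p.

Definition um_check (n : nat) (fs : nat -> bmat) : bool :=
  all (fun r => beq n n (bevalp n fs r) bzero) um_rels.

Definition hom_check (m n : nat) (fX fY : nat -> bmat) (f : bmat) : bool :=
  let commutes g := beq n m (bmul m f (fX g)) (bmul n (fY g) f) in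
  [&& commutes 0, commutes 1 & commutes 2]%N.

Definition cyc_check (n : nat) (fs : nat -> bmat) (q : nat -> ncpoly) (m0 : bmat) : bool :=
  all (fun i => beq n 1 (bmul n (bevalp n fs (q i)) m0) (bunit i)) (iota 0 n).

Definition mx01_tabs (sA sB sC : seq (nat * nat)) (g : nat) : bmat :=
  bmx01 (match g with 0 => sA | 1 => sB | _ => sC end).

Section Presentations.
Local Open Scope ring_scope.
Variable F : fieldType.
Hypothesis char2 : 2%N \in [pchar F].

Definition presents (X : umod F) (fs : nat -> bmat) :=
  forall g, gen_mx X g = bmx F (udim X) (udim X) (fs g).

Lemma presents_trmod X fs : presents X fs -> presents (trmod X) (fun g => btr (fs g)).
Proof. by move=> presX g; rewrite gen_mx_trmod presX bmx_tr. Qed.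

Lemma is_hom_presents X Y fX fY f : presents X fX -> presents Y fY ->
  hom_check (udim X) (udim Y) fX fY f -> is_hom (bmx F (udim Y) (udim X) f).
Proof.
move=> presX presY /and3P[c0 c1 c2]; split;
  [move: (presX 0%N) (presY 0%N) c0 | move: (presX 1%N) (presY 1%N) c1
  | move: (presX 2%N) (presY 2%N) c2];
  by move=> /= -> -> check; rewrite !(bmxM char2); apply: bmx_eq.
Qed.

Lemma presents_mx01 n sA sB sC :
  presents (UMod (mx01 F n sA) (mx01 F n sB) (mx01 F n sC)) (mx01_tabs sA sB sC).
Proof. by case=> [|[|g]]; apply: mx01E. Qed.

Section Presented.
Variables (X : umod F) (fs : nat -> bmat).
Hypothesis presX : presents X fs.

Lemma evalw_presents w : evalw X w = bmx F _ _ (bevalw (udim X) fs w).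
Proof.
by elim: w => [|g w IH] /=; rewrite ?bmx1 // IH presX (bmxM char2) bmx_memo.
Qed.

Lemma evalp_presents p : evalp X p = bmx F _ _ (bevalp (udim X) fs p).
Proof.
elim: p => [|w p IH]; first by rewrite /evalp big_nil bmx0.
by rewrite /evalp big_cons -/(evalp X p) IH evalw_presents (bmxD char2).
Qed.

Lemma is_umod_presents : um_check (udim X) fs -> is_umod X.
Proof.
move=> /allP check; apply/(is_umodP char2) => r /check.
by rewrite evalp_presents => /bmx_eq0.
Qed.

Lemma cyc_basis_presents q m0 : cyc_check (udim X) fs q m0 ->
  forall i : 'I_(udim X), evalp X (q i) *m bmx F _ 1 m0 = delta_mx i 0.
Proof.
move=> /allP check i; rewrite evalp_presents (bmxM char2) delta_bmx; apply: bmx_eq.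
by apply: check; rewrite mem_iota ltn_ord.
Qed.

Lemma cyc_map_presents q m :
  let n := udim X in
  cyc_map X q (bmx F n 1 m) =
  bmx F n n (bmemo n n (fun k i => bmul n (bevalp n fs (q i)) m k 0%N)).
Proof.
by move=> n; rewrite bmx_memo; apply/matrixP=> k i; rewrite mxE evalp_presents (bmxM char2) !mxE.
Qed.

End Presented.
End Presentations.

(* The basis a^i b^j c^k (i, j < 4, k < 2) of u(m), ordered by length, and
   the matrices of left multiplication by a, b, c in it. *)
Definition reg_words : seq word :=
  [:: [::]; [:: 0]; [:: 1]; [:: 2]; [:: 0; 0]; [:: 0; 1]; [:: 0; 2]; [:: 1; 1];
      [:: 1; 2]; [:: 0; 0; 0]; [:: 0; 0; 1]; [:: 0; 0; 2]; [:: 0; 1; 1];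
      [:: 0; 1; 2]; [:: 1; 1; 1]; [:: 1; 1; 2]; [:: 0; 0; 0; 1]; [:: 0; 0; 0; 2];
      [:: 0; 0; 1; 1]; [:: 0; 0; 1; 2]; [:: 0; 1; 1; 1]; [:: 0; 1; 1; 2];
      [:: 1; 1; 1; 2]; [:: 0; 0; 0; 1; 1]; [:: 0; 0; 0; 1; 2]; [:: 0; 0; 1; 1; 1];
      [:: 0; 0; 1; 1; 2]; [:: 0; 1; 1; 1; 2]; [:: 0; 0; 0; 1; 1; 1];
      [:: 0; 0; 0; 1; 1; 2]; [:: 0; 0; 1; 1; 1; 2]; [:: 0; 0; 0; 1; 1; 1; 2]]%N.

Definition reg_a : seq (nat * nat) :=
  [:: (1,0); (4,1); (5,2); (6,3); (9,4); (10,5); (11,6); (12,7); (13,8); (16,10);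
      (17,11); (18,12); (19,13); (20,14); (21,15); (23,18); (24,19); (25,20);
      (26,21); (27,22); (28,25); (29,26); (30,27); (31,30)]%N.
Definition reg_b : seq (nat * nat) :=
  [:: (1,4); (2,0); (2,5); (3,1); (3,6); (4,9); (5,1); (5,10); (6,11); (7,2);
      (8,3); (8,5); (10,4); (11,9); (12,5); (12,18); (13,6); (13,19); (14,7);
      (14,20); (15,8); (15,12); (15,21); (16,9); (18,10); (18,23); (19,11);
      (19,16); (19,24); (20,12); (20,25); (21,13); (21,26); (22,15); (22,20);
      (23,16); (24,17); (25,18); (26,19); (26,23); (27,21); (27,30); (28,23);
      (29,24); (30,26); (30,28); (30,31); (31,29)]%N.
Definition reg_c : seq (nat * nat) :=
  [:: (1,1); (2,2); (3,0); (3,3); (6,1); (8,2); (9,9); (10,10); (11,4); (11,11);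
      (12,12); (13,5); (13,13); (14,14); (15,7); (15,15); (17,9); (19,10);
      (21,12); (22,14); (23,23); (24,16); (24,24); (25,25); (26,18); (26,26);
      (27,20); (27,27); (29,23); (30,25); (31,28); (31,31)]%N.

Definition reg_word (i : nat) : word := nth [::] reg_words i.
Definition reg_tab : nat -> bmat := mx01_tabs reg_a reg_b reg_c.

Definition reg_table_check : bool :=
  all (fun g => all (fun i =>
         perm_eq (um_nf 200 [:: g :: reg_word i])
                 [seq reg_word j | j <- iota 0 32 & reg_tab g j i])
       (iota 0 32)) [:: 0; 1; 2]%N.

Lemma reg_table_checkT : reg_table_check. Proof. vm_compute. reflexivity. Qed.

(* Every basis word is [g :: w] for a basis word [w] with [g . w = g :: w]
   in the table. *)
Definition reg_words_check : bool :=
  all (fun i => if reg_word i is g :: w then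
                  [&& index w reg_words < 32, g < 3 &
                      all (fun j => reg_tab g j (index w reg_words) == (j == i))
                          (iota 0 32)]
                else i == 0) (iota 0 32).

Lemma reg_words_checkT : reg_words_check. Proof. vm_compute. reflexivity. Qed.

Section RegularModule.
Local Open Scope ring_scope.
Variable F : fieldType.
Hypothesis char2 : 2%N \in [pchar F].

Definition reg_mod : umod F :=
  UMod (mx01 F 32 reg_a) (mx01 F 32 reg_b) (mx01 F 32 reg_c).

Lemma presents_reg : presents reg_mod reg_tab.
Proof. exact: presents_mx01. Qed.

Lemma evalw_reg_table (X : umod F) g (i : 'I_32) : is_umod X -> (g < 3)%N ->
  gen_mx X g *m evalw X (reg_word i)
  = \sum_(j < 32) (reg_tab g j i)%:R *: evalw X (reg_word j).
Proof.
move=> umX g3.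
have nf_gi : perm_eq (um_nf 200 [:: g :: reg_word i])
                     [seq reg_word j | j <- iota 0 32 & reg_tab g j i].
  have g_in : g \in [:: 0; 1; 2]%N by case: g g3 => [|[|[|]]].
  by move: reg_table_checkT => /allP/(_ g g_in)/allP; apply; rewrite mem_iota ltn_ord.
have -> : gen_mx X g *m evalw X (reg_word i) = evalp X [:: g :: reg_word i].
  by rewrite /evalp big_seq1.
rewrite -(evalp_um_nf char2 umX 200) /evalp (perm_big _ nf_gi).
rewrite big_map big_filter big_mkcond -[iota 0 32]/(index_iota 0 32) big_mkord.
by apply: eq_bigr => j _; case: reg_tab; rewrite ?scale1r ?scale0r.
Qed.

Definition orbit_mx (X : umod F) (x : 'cV[F]_(udim X)) : 'M[F]_(udim X, 32) :=
  \matrix_(k, i) (evalw X (reg_word i) *m x) k 0.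

Lemma orbit_mx_col (X : umod F) x i :
  orbit_mx x *m delta_mx i 0 = evalw X (reg_word i) *m x.
Proof. by apply/matrixP=> k l; rewrite -colE !mxE (ord1 l). Qed.

Lemma is_hom_orbit_mx (X : umod F) x :
  is_umod X -> is_hom (X := reg_mod) (Y := X) (orbit_mx x).
Proof.
move=> umX; apply/is_homP => g; rewrite presents_reg.
wlog g3 : g / (g < 3)%N => [gen_g3|].
  by case: (ltnP g 3) => [/gen_g3 //|]; case: g => [|[|[|g]]] // _; apply: (gen_g3 2%N).
apply/matrixP=> k i.
transitivity ((gen_mx X g *m evalw X (reg_word i) *m x) k 0); last first.
  by rewrite -mulmxA !mxE; apply: eq_bigr => l _; rewrite !mxE.
rewrite (evalw_reg_table i umX g3) mulmx_suml summxE mxE; apply: eq_bigr => j _.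
by rewrite -scalemxAl !mxE mulrC.
Qed.

Lemma evalw_reg_word (i : 'I_32) :
  evalw reg_mod (reg_word i) *m delta_mx 0 0 = delta_mx i (0 : 'I_1).
Proof.
suff gen : forall w (j : 'I_32),
    reg_word j = w -> evalw reg_mod w *m delta_mx 0 0 = delta_mx j (0 : 'I_1).
  exact: gen.
elim=> [|g w IH] j wj; move: reg_words_checkT => /allP/(_ j).
  rewrite mem_iota ltn_ord wj => /(_ isT)/eqP j0.
  by rewrite mul1mx; congr delta_mx; apply: val_inj.
rewrite mem_iota ltn_ord wj => /(_ isT)/and3P[w_lt _ /allP col_j].
have ww : reg_word (Ordinal w_lt) = w by apply: nth_index; rewrite -index_mem.
rewrite /= -mulmxA (IH _ ww) presents_reg -colE; apply/matrixP=> k l.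
have := col_j k; rewrite mem_iota ltn_ord => /(_ isT)/eqP tab_kj.
by rewrite !mxE (ord1 l) eqxx andbT tab_kj.
Qed.

Lemma projective_reg : projective reg_mod.
Proof.
move=> X Y g h umX umY hg sg hh.
have /row_freeP[s gs] : row_free g by rewrite /row_free sg.
pose x := s *m (h *m delta_mx 0 (0 : 'I_1)).
exists (orbit_mx x); split; first exact: is_hom_orbit_mx.
have gx : g *m x = h *m delta_mx 0 0 by rewrite /x mulmxA gs mul1mx.
apply: eq_mx_delta_col => i; rewrite -mulmxA orbit_mx_col mulmxA hom_evalw //.
by rewrite -mulmxA gx mulmxA -hom_evalw // -mulmxA evalw_reg_word.
Qed.

End RegularModule.

(* M and N are direct summands of u(m): [M_incl]/[M_proj] embed M into the
   regular module and retract onto it, and likewise for N. *)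
Definition M_incl : bmat :=
  bmx01 [:: (0,4); (1,5); (3,4); (4,6); (5,4); (6,5); (9,7); (10,5); (11,6); (13,4);
            (14,0); (16,6); (17,7); (18,4); (19,5); (20,1); (22,0); (23,5); (24,6);
            (25,2); (26,4); (27,1); (28,3); (29,5); (30,2); (31,3)]%N.
Definition M_proj : bmat :=
  bmx01 [:: (0,14); (1,7); (1,20); (2,2); (2,12); (2,25); (3,5); (3,18); (3,28);
            (4,0); (5,1); (6,4); (7,9)]%N.
Definition N_incl : bmat :=
  bmx01 [:: (2,4); (5,5); (7,0); (8,4); (10,6); (12,1); (13,5); (15,0); (16,7);
            (18,2); (19,6); (20,0); (21,1); (23,3); (24,7); (25,1); (25,4); (26,2);
            (27,0); (28,2); (28,5); (29,3); (30,1); (30,4); (31,2); (31,5)]%N.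
Definition N_proj : bmat :=
  bmx01 [:: (0,7); (1,12); (2,0); (2,18); (3,1); (3,23); (4,2); (5,0); (5,5); (6,1);
            (6,10); (7,4); (7,16)]%N.

(* Both M and N are generated by w1 (index 4): [M_gens i . w1] is the i-th
   basis vector; [M_idem] acts as the projection onto the span of w1 and v4
   (the socle of M), and [N_idem] onto the span of w1 and v2. *)
Definition M_gens : seq ncpoly :=
  [:: [:: [:: 1; 1; 1]]; [:: [:: 1; 1]]; [:: [:: 1]]; [:: [:: 1; 0]];
      [:: [::]]; [:: [:: 0]]; [:: [:: 0; 0]]; [:: [:: 0; 0; 0]]]%N.
Definition N_gens : seq ncpoly :=
  [:: [:: [:: 1]]; [:: [:: 1; 0]; [::]]; [:: [:: 0; 1; 0]; [:: 0]];
      [:: [:: 0; 0; 1; 0]; [:: 0; 0]]; [:: [::]]; [:: [:: 0]]; [:: [:: 0; 0]];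
      [:: [:: 0; 0; 0]]]%N.
Definition M_idem : ncpoly := [:: [::]; [:: 2]; [:: 0; 1]; [:: 0; 0; 1; 1]]%N.
Definition N_idem : ncpoly := [:: [:: 2]; [:: 0; 0; 1; 1; 2]]%N.

Lemma presents_V0 (F : fieldType) : presents (V0 F) (fun _ => bzero).
Proof. by case=> [|[|g]]; rewrite /= bmx0. Qed.

(* The tables are read off the definitions of V1, Mmod and Nmod by unification. *)
Definition presents_V1 (F : fieldType) : presents (V1 F) _ := @presents_mx01 F _ _ _ _.
Definition presents_M (F : fieldType) : presents (Mmod F) _ := @presents_mx01 F _ _ _ _.
Definition presents_N (F : fieldType) : presents (Nmod F) _ := @presents_mx01 F _ _ _ _.

Definition nil_endo_M (F : fieldType) : 'M[F]_8 :=
  cyc_map (Mmod F) (nth [::] M_gens) (bmx F 8 1 (btr (bsel 3))).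
Definition nil_endo_N (F : fieldType) : 'M[F]_8 :=
  cyc_map (Nmod F) (nth [::] N_gens) (bmx F 8 1 (btr (bsel 1))).

Section Concrete.
Local Open Scope ring_scope.
Variable F : fieldType.
Hypothesis char2 : 2%N \in [pchar F].

Ltac gf2_decide := vm_compute; reflexivity.

Ltac gf2_check :=
  rewrite ?(bmxM char2) ?(bmxD char2);
  first [apply: bmx_eq0 | apply: bmx_eq1 | apply: bmx_eq]; gf2_decide.

Lemma is_umod_V0 : is_umod (V0 F).
Proof. by apply: (is_umod_presents char2 (presents_V0 F)); gf2_decide. Qed.

Lemma is_umod_V1 : is_umod (V1 F).
Proof. by apply: (is_umod_presents char2 (presents_V1 F)); gf2_decide. Qed.

Lemma is_umod_M : is_umod (Mmod F).
Proof. by apply: (is_umod_presents char2 (presents_M F)); gf2_decide. Qed.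

Lemma is_umod_N : is_umod (Nmod F).
Proof. by apply: (is_umod_presents char2 (presents_N F)); gf2_decide. Qed.

Lemma projective_M : projective (Mmod F).
Proof.
apply: (projective_retract (P := Mmod F) (Q := reg_mod F) (i := bmx F 32 8 M_incl)
                           (r := bmx F 8 32 M_proj)).
- by apply: (is_hom_presents char2 (presents_M F) (presents_reg F)); gf2_decide.
- by apply: (is_hom_presents char2 (presents_reg F) (presents_M F)); gf2_decide.
- by gf2_check.
- exact: projective_reg.
Qed.

Lemma projective_N : projective (Nmod F).
Proof.
apply: (projective_retract (P := Nmod F) (Q := reg_mod F) (i := bmx F 32 8 N_incl)
                           (r := bmx F 8 32 N_proj)).
- by apply: (is_hom_presents char2 (presents_N F) (presents_reg F)); gf2_decide.
- by apply: (is_hom_presents char2 (presents_reg F) (presents_N F)); gf2_decide.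
- by gf2_check.
- exact: projective_reg.
Qed.

Lemma injective_M : injective (Mmod F).
Proof.
apply: (injective_iso (I := trmod (Mmod F))); last exact: injective_trmod projective_M.
have presT := presents_trmod (presents_M F).
exists (bmx F 8 8 (banti 8)), (bmx F 8 8 (banti 8)); split; try by gf2_check.
- by apply: (is_hom_presents char2 presT (presents_M F)); gf2_decide.
- by apply: (is_hom_presents char2 (presents_M F) presT); gf2_decide.
Qed.

Lemma injective_N : injective (Nmod F).
Proof.
apply: (injective_iso (I := trmod (Nmod F))); last exact: injective_trmod projective_N.
have presT := presents_trmod (presents_N F).
exists (bmx F 8 8 (banti 8)), (bmx F 8 8 (banti 8)); split; try by gf2_check.
- by apply: (is_hom_presents char2 presT (presents_N F)); gf2_decide.
- by apply: (is_hom_presents char2 (presents_N F) presT); gf2_decide.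
Qed.

Lemma hom_endo_M (phi : 'M[F]_8) : is_hom (X := Mmod F) (Y := Mmod F) phi ->
  exists a b : F, phi = a *: 1%:M + b *: nil_endo_M F.
Proof.
move: phi; apply: (hom_endo_decomp (X := Mmod F) (m0 := bmx F 8 1 (btr (bsel 4)))
                   (r1 := bmx F 1 8 (bsel 4)) (r2 := bmx F 1 8 (bsel 3)) (t := M_idem)).
- by apply: (cyc_basis_presents char2 (presents_M F)); gf2_decide.
- by rewrite (evalp_presents char2 (presents_M F)); gf2_check.
- by rewrite (evalp_presents char2 (presents_M F)); gf2_check.
Qed.

Lemma hom_endo_N (phi : 'M[F]_8) : is_hom (X := Nmod F) (Y := Nmod F) phi ->
  exists a b : F, phi = a *: 1%:M + b *: nil_endo_N F.
Proof.
move: phi; apply: (hom_endo_decomp (X := Nmod F) (m0 := bmx F 8 1 (btr (bsel 4)))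
                   (r1 := bmx F 1 8 (bsel 4)) (r2 := bmx F 1 8 (bsel 1)) (t := N_idem)).
- by apply: (cyc_basis_presents char2 (presents_N F)); gf2_decide.
- by rewrite (evalp_presents char2 (presents_N F)); gf2_check.
- by rewrite (evalp_presents char2 (presents_N F)); gf2_check.
Qed.

Lemma nil_endo_M_sqr : nil_endo_M F *m nil_endo_M F = 0.
Proof. by rewrite /nil_endo_M (cyc_map_presents char2 (presents_M F)); gf2_check. Qed.

Lemma nil_endo_N_sqr : nil_endo_N F *m nil_endo_N F = 0.
Proof. by rewrite /nil_endo_N (cyc_map_presents char2 (presents_N F)); gf2_check. Qed.

Lemma essential_epi_M : essential_epi (P := Mmod F) (V := V0 F) (bmx F 1 8 (bsel 4)).
Proof.
apply: (essential_epi_local (M := Mmod F) hom_endo_M nil_endo_M_sqr (V := V0 F)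
                            (s := bmx F 8 1 (btr (bsel 4)))).
- exact: is_umod_V0.
- exact: projective_M.
- by [].
- by apply: (is_hom_presents char2 (presents_M F) (presents_V0 F)); gf2_decide.
- by gf2_check.
- by rewrite /nil_endo_M (cyc_map_presents char2 (presents_M F)); gf2_check.
Qed.

Lemma essential_mono_M : essential_mono (V := V0 F) (I := Mmod F) (bmx F 8 1 (btr (bsel 3))).
Proof.
apply: (essential_mono_local (M := Mmod F) hom_endo_M nil_endo_M_sqr (V := V0 F)
                             (r := bmx F 1 8 (bsel 3))).
- exact: is_umod_V0.
- exact: injective_M.
- by [].
- by apply: (is_hom_presents char2 (presents_V0 F) (presents_M F)); gf2_decide.
- by gf2_check.
- by rewrite /nil_endo_M (cyc_map_presents char2 (presents_M F)); gf2_check.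
Qed.

Lemma essential_epi_N : essential_epi (P := Nmod F) (V := V1 F) (bmx F 3 8 (bsel 4)).
Proof.
apply: (essential_epi_local (M := Nmod F) hom_endo_N nil_endo_N_sqr (V := V1 F)
                            (s := bmx F 8 3 (btr (bsel 4)))).
- exact: is_umod_V1.
- exact: projective_N.
- by [].
- by apply: (is_hom_presents char2 (presents_N F) (presents_V1 F)); gf2_decide.
- by gf2_check.
- by rewrite /nil_endo_N (cyc_map_presents char2 (presents_N F)); gf2_check.
Qed.

Lemma essential_mono_N : essential_mono (V := V1 F) (I := Nmod F) (bmx F 8 3 (btr (bsel 1))).
Proof.
apply: (essential_mono_local (M := Nmod F) hom_endo_N nil_endo_N_sqr (V := V1 F)
                             (r := bmx F 3 8 (bsel 1))).
- exact: is_umod_V1.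
- exact: injective_N.
- by [].
- by apply: (is_hom_presents char2 (presents_V1 F) (presents_N F)); gf2_decide.
- by gf2_check.
- by rewrite /nil_endo_N (cyc_map_presents char2 (presents_N F)); gf2_check.
Qed.

End Concrete.

Theorem proposition3p11 (F : closedFieldType) (char2 : (2%N \in [pchar F])%R) :
  [/\ proj_cover_iso (V0 F) (Mmod F), inj_env_iso (V0 F) (Mmod F),
      proj_cover_iso (V1 F) (Nmod F) & inj_env_iso (V1 F) (Nmod F)].
Proof.
have pcM : projective_cover (Mmod F) (V0 F).
  by split; [apply: is_umod_M | apply: projective_M | eexists; apply: essential_epi_M].
have ieM : injective_envelope (Mmod F) (V0 F).
  by split; [apply: is_umod_M | apply: injective_M | eexists; apply: essential_mono_M].
have pcN : projective_cover (Nmod F) (V1 F).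
  by split; [apply: is_umod_N | apply: projective_N | eexists; apply: essential_epi_N].
have ieN : injective_envelope (Nmod F) (V1 F).
  by split; [apply: is_umod_N | apply: injective_N | eexists; apply: essential_mono_N].
split; split=> // X.
- exact: proj_cover_unique (is_umod_V0 char2) pcM.
- exact: inj_env_unique (is_umod_V0 char2) ieM.
- exact: proj_cover_unique (is_umod_V1 char2) pcN.
- exact: inj_env_unique (is_umod_V1 char2) ieN.
Qed.
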